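(* Let $b\in\Gamma^{*,\infty}_{A_p,\rho}(\mathbb R^{2d})$ be hypoelliptic, with hypoellipticity conditions (i) and (ii) holding with a constant $B$. Then for every $h>0$ there exists $C>0$ (resp. there exist $h,C>0$) such that $$|D^\alpha_w(b(w))^n|\le C2^nh^{|\alpha|}A_\alpha\langle w\rangle^{-\rho|\alpha|}|b(w)|^n$$ for all $\alpha\in\mathbb N^{2d}$, $n\in\mathbb N$, $w\in Q^c_B$. If the hypoellipticity conditions hold on all of $\mathbb R^{2d}$ (i.e. $B=0$), the estimate holds for all $w\in\mathbb R^{2d}$.
   Context: Notation: $\mathbb N=\{0,1,\dots\}$, $\langle x\rangle=(1+|x|^2)^{1/2}$, $D^\alpha=i^{-|\alpha|}\partial^\alpha$, $w=(x,\xi)\in\mathbb R^{2d}$. Sequences $M_p,A_p$ positive with $M_0=M_1=A_0=A_1=1$; (M.1) $N_p^2\le N_{p-1}N_{p+1}$; (M.2) $N_p\le c_0H^p\min_{q\le p}N_{p-q}N_q$; (M.3) $\sum_{p>q}N_{p-1}/N_p\le c_0qN_q/N_{q+1}$; (M.3)' $\sum N_{p-1}/N_p<\infty$; (M.4) $N_p^2/p!^2\le(N_{p-1}/(p-1)!)(N_{p+1}/(p+1)!)$. Standing: $M_p$ satisfies (M.1),(M.2),(M.3); $A_p$ satisfies (M.1),(M.2),(M.3)',(M.4); $A_p\le cL^pM_p$; $\rho$ with $\rho_0\le\rho\le1$ (strict if inf not attained), $\rho_0=\inf\{r>0:\exists c,L,\ A_p\le cL^pM_p^r\}$. $A_\alpha=A_{|\alpha|}$,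 $M(\lambda)=\sup_p\ln_+(\lambda^p/M_p)$. $*$: Beurling $(M_p)$ or Roumieu $\{M_p\}$; ''(resp. ...)'' refers to Roumieu. $\Gamma^{(M_p),\infty}_{A_p,\rho}(\mathbb R^{2d})=\varinjlim_{m\to\infty}\varprojlim_{h\to0}$, $\Gamma^{\{M_p\},\infty}_{A_p,\rho}(\mathbb R^{2d})=\varinjlim_{h\to\infty}\varprojlim_{m\to0}$ of Banach spaces of $a\in C^\infty(\mathbb R^{2d})$ with finite $\sup|D^\alpha_\xi D^\beta_xa|\langle w\rangle^{\rho(|\alpha|+|\beta|)}e^{-M(m|\xi|)-M(m|x|)}/(h^{|\alpha|+|\beta|}A_\alpha A_\beta)$. $Q_t=\{(x,\xi):\langle x\rangle<t,\langle\xi\rangle<t\}$. Hypoellipticity with constant $B$: (i) there are $c,m>0$ (resp. for every $m>0$ there is $c>0$) with $|b(x,\xi)|\ge ce^{-M(m|x|)-M(m|\xi|)}$ on $Q^c_B$; (ii) for every $h>0$ there is $C$ (resp. there are $h,C$) with $|D^\alpha_\xi D^\beta_xb|\le Ch^{|\alpha|+|\beta|}|b|A_\alpha A_\beta\langle w\rangle^{-\rho(|\alpha|+|\beta|)}$ on $Q^c_B$. *)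

From HB Require Import structures.
From mathcomp Require Import all_boot all_order all_algebra.
From mathcomp Require Import all_classical all_reals all_analysis.
From mathcomp Require Import complex.
Import Order.TTheory GRing.Theory Num.Theory.
Import numFieldNormedType.Exports.

Set Implicit Arguments.
Unset Strict Implicit.
Unset Printing Implicit Defensive.

Local Open Scope ring_scope.
Local Open Scope classical_set_scope.

Inductive ultra_kind := Beurling | Roumieu.

Definition cabs (R : realType) (z : R[i]) : R := ComplexField.Normc.normc z.

Definition iC (R : realType) : R[i] := Complex 0 1.

Definition eucl (R : realType) n (x : 'rV[R]_n) : R :=
  Num.sqrt (\sum_(j < n) x 0 j ^+ 2).
Definition jap (R : realType) n (x : 'rV[R]_n) : R :=
  Num.sqrt (1 + \sum_(j < n) x 0 j ^+ 2).

Definition ev (R : realType) n (j : 'I_n) : 'rV[R]_n := delta_mx 0 j.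

Definition pd (R : realType) n (j : 'I_n) (f : 'rV[R]_n -> R[i]) :
    'rV[R]_n -> R[i] :=
  fun x => Complex ('D_(ev R j) (fun y => complex.Re (f y)) x)
                   ('D_(ev R j) (fun y => complex.Im (f y)) x).

Definition mlen n (g : 'I_n -> nat) : nat := (\sum_(j < n) g j)%N.

(** d^g f : first derivatives in x_0 (g 0 times), then x_1, ... *)
Definition pdm (R : realType) n (g : 'I_n -> nat) (f : 'rV[R]_n -> R[i]) :
    'rV[R]_n -> R[i] :=
  foldr (fun j h => iter (g j) (pd j) h) f (rev (enum 'I_n)).

Definition Dop (R : realType) n (g : 'I_n -> nat) (f : 'rV[R]_n -> R[i]) :
    'rV[R]_n -> R[i] :=
  fun x => (iC R ^- mlen g) * pdm g f x.

Definition smooth (R : realType) n (f : 'rV[R]_n -> R[i]) : Prop :=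
  forall js : seq 'I_n,
    let g := foldr (@pd R n) f js in
    [/\ continuous (fun y => complex.Re (g y)),
        continuous (fun y => complex.Im (g y)) &
        forall (j : 'I_n) (x : 'rV[R]_n),
          derivable (fun y => complex.Re (g y)) x (ev R j) /\
          derivable (fun y => complex.Im (g y)) x (ev R j)].

Definition xpart (R : realType) d (w : 'rV[R]_(d + d)) : 'rV[R]_d := lsubmx w.
Definition xipart (R : realType) d (w : 'rV[R]_(d + d)) : 'rV[R]_d := rsubmx w.
Definition gx d (g : 'I_(d + d) -> nat) : 'I_d -> nat := fun i => g (lshift d i).
Definition gxi d (g : 'I_(d + d) -> nat) : 'I_d -> nat := fun i => g (rshift d i).

Definition Qt (R : realType) d (t : R) (w : 'rV[R]_(d + d)) : Prop :=
  jap (xpart w) < t /\ jap (xipart w) < t.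

Definition seq_pos (R : realType) (N : nat -> R) : Prop :=
  (forall p, 0 < N p) /\ N 0%N = 1 /\ N 1%N = 1.
Definition cond_M1 (R : realType) (N : nat -> R) : Prop :=
  forall p : nat, (1 <= p)%N -> N p ^+ 2 <= N p.-1 * N p.+1.
Definition cond_M2 (R : realType) (N : nat -> R) : Prop :=
  exists c0 H : R, forall p q : nat, (q <= p)%N ->
    N p <= c0 * H ^+ p * (N (p - q)%N * N q).
Definition cond_M3 (R : realType) (N : nat -> R) : Prop :=
  exists c0 : R, forall q : nat, (1 <= q)%N -> forall n : nat,
    \sum_(q.+1 <= p < n) N p.-1 / N p <= c0 * q%:R * N q / N q.+1.
Definition cond_M3' (R : realType) (N : nat -> R) : Prop :=
  cvg (series (fun p : nat => N p / N p.+1) @ \oo).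
Definition cond_M4 (R : realType) (N : nat -> R) : Prop :=
  forall p : nat, (1 <= p)%N ->
    (N p / (p`!)%:R) ^+ 2 <= (N p.-1 / (p.-1`!)%:R) * (N p.+1 / (p.+1`!)%:R).

Definition rho_set (R : realType) (M A : nat -> R) : set R :=
  [set r | 0 < r /\ exists c L : R, forall p : nat, A p <= c * L ^+ p * M p `^ r].
Definition rho0 (R : realType) (M A : nat -> R) : R := inf (rho_set M A).

Definition standing (R : realType) (M A : nat -> R) (rho : R) : Prop :=
  [/\ seq_pos M /\ seq_pos A,
      [/\ cond_M1 M, cond_M2 M & cond_M3 M],
      [/\ cond_M1 A, cond_M2 A, cond_M3' A & cond_M4 A],
      (exists c L : R, forall p : nat, A p <= c * L ^+ p * M p) &
      [/\ rho0 M A <= rho, rho <= 1 & (~ rho_set M A (rho0 M A) -> rho0 M A < rho)]].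

Definition lnp (R : realType) (t : R) : R := Num.max 0 (ln t).
Definition assocM (R : realType) (M : nat -> R) (lam : R) : R :=
  sup (range (fun p : nat => lnp (lam ^+ p / M p))).

(** finiteness of the defining seminorm of the Banach space with parameters m, h *)
Definition gamma_seminorm_finite (R : realType) d (M A : nat -> R) (rho m h : R)
    (a : 'rV[R]_(d + d) -> R[i]) : Prop :=
  exists C : R, forall (g : 'I_(d + d) -> nat) (w : 'rV[R]_(d + d)),
    cabs (Dop g a w) * jap w `^ (rho * (mlen g)%:R)
      * expR (- assocM M (m * eucl (xipart w)) - assocM M (m * eucl (xpart w)))
      / (h ^+ mlen g * A (mlen (gxi g)) * A (mlen (gx g))) <= C.

Definition Gamma (R : realType) (k : ultra_kind) d (M A : nat -> R) (rho : R)
    (a : 'rV[R]_(d + d) -> R[i]) : Prop :=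
  smooth a /\
  match k with
  | Beurling => exists m : R, 0 < m /\ forall h : R, 0 < h ->
                  gamma_seminorm_finite M A rho m h a
  | Roumieu => exists h : R, 0 < h /\ forall m : R, 0 < m ->
                  gamma_seminorm_finite M A rho m h a
  end.

Definition hypo_i (R : realType) (k : ultra_kind) d (M : nat -> R) (B : R)
    (b : 'rV[R]_(d + d) -> R[i]) : Prop :=
  let P c m := forall w, ~ Qt B w ->
     c * expR (- assocM M (m * eucl (xpart w)) - assocM M (m * eucl (xipart w)))
       <= cabs (b w) in
  match k with
  | Beurling => exists c m : R, [/\ 0 < c, 0 < m & P c m]
  | Roumieu => forall m : R, 0 < m -> exists c : R, 0 < c /\ P c m
  end.

Definition hypo_ii (R : realType) (k : ultra_kind) d (A : nat -> R) (rho B : R)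
    (b : 'rV[R]_(d + d) -> R[i]) : Prop :=
  let P h C := forall (g : 'I_(d + d) -> nat) w, ~ Qt B w ->
     cabs (Dop g b w) <= C * h ^+ mlen g * cabs (b w)
        * A (mlen (gxi g)) * A (mlen (gx g)) * jap w `^ (- (rho * (mlen g)%:R))
  in
  match k with
  | Beurling => forall h : R, 0 < h -> exists C : R, P h C
  | Roumieu => exists h C : R, 0 < h /\ P h C
  end.

Definition power_estimate (R : realType) d (A : nat -> R) (rho B h C : R)
    (b : 'rV[R]_(d + d) -> R[i]) : Prop :=
  forall (g : 'I_(d + d) -> nat) (n : nat) (w : 'rV[R]_(d + d)), ~ Qt B w ->
    cabs (Dop g (fun v => b v ^+ n) w)
      <= C * 2 ^+ n * h ^+ mlen g * A (mlen g) * jap w `^ (- (rho * (mlen g)%:R))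
         * cabs (b w) ^+ n.

From HB Require Import structures.
From mathcomp Require Import all_boot all_order all_algebra.
From mathcomp Require Import all_classical all_reals all_analysis.
From mathcomp Require Import complex ring lra.
Import Order.TTheory GRing.Theory Num.Theory.
Import numFieldNormedType.Exports.

Set Implicit Arguments.
Unset Strict Implicit.
Unset Printing Implicit Defensive.

Local Open Scope ring_scope.

(* Write [a_p = A_p / p!], which is log-convex by (M.4) with [a_0 = a_1 = 1].
   Along a nonincreasing sequence of directions (i.e. a multi-index), Leibniz's
   rule writes a derivative of [b^(n+1)] as a sum of products of derivatives of
   [b] and of [b^n] along subsequences, which are again multi-indices.
   Hypothesis (ii), after splitting [A_beta A_alpha <= A_(|alpha|+|beta|)],
   bounds [D^alpha b] by [C |b| h^m m! a_m <w>^(-rho m)] with [m = |alpha|], so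
   by induction on [n] the normalized derivatives of [b^n] are bounded by the
   [n]-fold convolution power of [(1, C a_1, C a_2, ...)]. Log-convexity bounds
   this by [a_m sum_l binom(n, l) (C^l / a_l) #(compositions of m into l parts)
   <= K a_m 2^m 2^n], where [K = sup_l C^l / a_l] is finite because (M.3)'
   forces [a_(l+1) / a_l -> oo]. The resulting factor [2^m] is absorbed by
   running the argument with [h / 2]. *)

(** * Leibniz's rule for complex-valued functions *)

Section PointwiseDerive.
Variables (R : realType) (V : normedModType R).
Implicit Types f g : V -> R.

(* Pointwise forms of [derivableD], [deriveM] & co.: unifying [f * g] with a
   lambda term on the spot is very slow, going through these is not. *)
Lemma derivable_fadd f g x v :
  derivable f x v -> derivable g x v -> derivable (fun y => f y + g y) x v.
Proof. exact: derivableD. Qed.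

Lemma derivable_fsub f g x v :
  derivable f x v -> derivable g x v -> derivable (fun y => f y - g y) x v.
Proof. exact: derivableB. Qed.

Lemma derivable_fmul f g x v :
  derivable f x v -> derivable g x v -> derivable (fun y => f y * g y) x v.
Proof. exact: derivableM. Qed.

Lemma derive_fadd f g x v : derivable f x v -> derivable g x v ->
  'D_v (fun y => f y + g y) x = 'D_v f x + 'D_v g x.
Proof. exact: deriveD. Qed.

Lemma derive_fsub f g x v : derivable f x v -> derivable g x v ->
  'D_v (fun y => f y - g y) x = 'D_v f x - 'D_v g x.
Proof. exact: deriveB. Qed.

Lemma derive_fmul f g x v : derivable f x v -> derivable g x v ->
  'D_v (fun y => f y * g y) x = f x * 'D_v g x + g x * 'D_v f x.
Proof. exact: deriveM. Qed.

End PointwiseDerive.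

Section ComplexParts.
Variables (R : realType) (T : Type).
Implicit Types f g : T -> R[i].

Lemma Re_fadd f g :
  (fun y => complex.Re (f y + g y)) = (fun y => complex.Re (f y) + complex.Re (g y)).
Proof. by apply/funext => y; case: (f y); case: (g y). Qed.

Lemma Im_fadd f g :
  (fun y => complex.Im (f y + g y)) = (fun y => complex.Im (f y) + complex.Im (g y)).
Proof. by apply/funext => y; case: (f y); case: (g y). Qed.

Lemma Re_fmul f g : (fun y => complex.Re (f y * g y)) =
  (fun y => complex.Re (f y) * complex.Re (g y) - complex.Im (f y) * complex.Im (g y)).
Proof. by apply/funext => y; case: (f y); case: (g y). Qed.

Lemma Im_fmul f g : (fun y => complex.Im (f y * g y)) =
  (fun y => complex.Re (f y) * complex.Im (g y) + complex.Im (f y) * complex.Re (g y)).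
Proof. by apply/funext => y; case: (f y); case: (g y). Qed.

End ComplexParts.

Section PartialDerivatives.
Variables (R : realType) (n : nat).
Implicit Types (f g : 'rV[R]_n -> R[i]) (j : 'I_n) (js : seq 'I_n).

Definition pderivable j f := forall x,
  derivable (fun y => complex.Re (f y)) x (ev R j) /\
  derivable (fun y => complex.Im (f y)) x (ev R j).

Definition inf_pderivable f := forall js j, pderivable j (foldr (@pd R n) f js).

Lemma smooth_inf_pderivable f : smooth f -> inf_pderivable f.
Proof. by move=> sf js j x; have [_ _] := sf js; apply. Qed.

Lemma pderivable_cst j (c : R[i]) : pderivable j (fun=> c).
Proof. by move=> x; split; apply: derivable_cst. Qed.

Lemma pderivableD j f g :
  pderivable j f -> pderivable j g -> pderivable j (fun x => f x + g x).
Proof.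
move=> df dg x; have [f1 f2] := df x; have [g1 g2] := dg x.
by rewrite Re_fadd Im_fadd; split; apply: derivable_fadd.
Qed.

Lemma pderivableM j f g :
  pderivable j f -> pderivable j g -> pderivable j (fun x => f x * g x).
Proof.
move=> df dg x; have [f1 f2] := df x; have [g1 g2] := dg x.
rewrite Re_fmul Im_fmul; split.
- by apply: derivable_fsub; apply: derivable_fmul.
- by apply: derivable_fadd; apply: derivable_fmul.
Qed.

Lemma pderivable_sum (I : Type) (r : seq I) (F : I -> 'rV[R]_n -> R[i]) j :
  (forall i, pderivable j (F i)) -> pderivable j (fun x => \sum_(i <- r) F i x).
Proof.
move=> dF; elim: r => [|i r IH].
  by under eq_fun do rewrite big_nil; apply: pderivable_cst.
by under eq_fun do rewrite big_cons; apply: pderivableD.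
Qed.

Lemma pd_cst j (c : R[i]) : pd j (fun=> c) = fun=> 0.
Proof. by apply/funext => x; rewrite /pd !derive_cst. Qed.

Lemma pdD j f g : pderivable j f -> pderivable j g ->
  pd j (fun x => f x + g x) = fun x => pd j f x + pd j g x.
Proof.
move=> df dg; apply/funext => x; have [f1 f2] := df x; have [g1 g2] := dg x.
by rewrite /pd Re_fadd Im_fadd (derive_fadd f1 g1) (derive_fadd f2 g2).
Qed.

Lemma pdM j f g : pderivable j f -> pderivable j g ->
  pd j (fun x => f x * g x) = fun x => pd j f x * g x + f x * pd j g x.
Proof.
move=> df dg; apply/funext => x; have [f1 f2] := df x; have [g1 g2] := dg x.
rewrite /pd Re_fmul Im_fmul.
rewrite (derive_fsub (derivable_fmul f1 g1) (derivable_fmul f2 g2)).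
rewrite (derive_fadd (derivable_fmul f1 g2) (derivable_fmul f2 g1)).
rewrite (derive_fmul f1 g1) (derive_fmul f2 g2) (derive_fmul f1 g2) (derive_fmul f2 g1).
case: (f x) => a b; case: (g x) => c e /=.
by apply/eqP; rewrite eq_complex /=; apply/andP; split; apply/eqP; ring.
Qed.

Lemma pd_sum (I : Type) (r : seq I) (F : I -> 'rV[R]_n -> R[i]) j :
  (forall i, pderivable j (F i)) ->
  pd j (fun x => \sum_(i <- r) F i x) = fun x => \sum_(i <- r) pd j (F i) x.
Proof.
move=> dF; elim: r => [|i r IH].
  by under eq_fun do rewrite big_nil; rewrite pd_cst; apply/funext => x; rewrite big_nil.
under eq_fun do rewrite big_cons.
rewrite pdD ?IH; [by apply/funext => x; rewrite big_cons | exact: dF | exact: pderivable_sum].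
Qed.

Lemma iter_pd_cst (c : R[i]) js :
  foldr (@pd R n) (fun=> c) js = fun=> if js is [::] then c else 0.
Proof.
by elim: js => [|j js IH] //=; rewrite IH; case: js {IH} => *; apply: pd_cst.
Qed.

Lemma inf_pderivable_cst (c : R[i]) : inf_pderivable (fun=> c).
Proof. by move=> js j; rewrite iter_pd_cst; apply: pderivable_cst. Qed.

End PartialDerivatives.

Fixpoint masks (m : nat) : seq bitseq :=
  if m is m'.+1 then [seq true :: mk | mk <- masks m'] ++ [seq false :: mk | mk <- masks m']
  else [:: [::]].

Lemma size_masks m mk : mk \in masks m -> size mk = m.
Proof.
elim: m mk => [|m IH] mk /=; first by rewrite inE => /eqP ->.
by rewrite mem_cat => /orP[] /mapP[mk' /IH <- ->].
Qed.

Lemma pascal_sum (R : pzSemiRingType) (X : nat -> R) k :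
  \sum_(l < k.+2) 'C(k.+1, l)%:R * X l =
  \sum_(l < k.+1) 'C(k, l)%:R * X l + \sum_(l < k.+1) 'C(k, l)%:R * X l.+1.
Proof.
rewrite big_ord_recl [in X in _ = X + _]big_ord_recl.
have -> : \sum_(i < k.+1) 'C(k.+1, bump 0 i)%:R * X (bump 0 i)
   = \sum_(i < k.+1) 'C(k, i.+1)%:R * X i.+1 + \sum_(i < k.+1) 'C(k, i)%:R * X i.+1.
  by rewrite -big_split /=; apply: eq_bigr => i _; rewrite /bump /= add1n binS natrD mulrDl.
rewrite big_ord_recr /= (bin_small (ltnSn k)) mul0r addr0 !bin0 addrA.
by congr (_ + _ + _); apply: eq_bigr => i _; rewrite /bump /= add1n.
Qed.

Lemma sum_masks_count (R : pzSemiRingType) m (F : nat -> R) :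
  \sum_(mk <- masks m) F (count id mk) = \sum_(j < m.+1) 'C(m, j)%:R * F j.
Proof.
elim: m F => [|m IH] F /=; first by rewrite big_seq1 big_ord1 /= mul1r.
rewrite big_cat !big_map /=.
under eq_bigr do rewrite add1n.
under [X in _ + X = _]eq_bigr do rewrite add0n.
by rewrite (IH (fun j => F j.+1)) IH pascal_sum addrC.
Qed.

Section Leibniz.
Variables (R : realType) (n : nat).
Implicit Types (f g : 'rV[R]_n -> R[i]) (js : seq 'I_n).

Lemma iter_pdM f g : inf_pderivable f -> inf_pderivable g -> forall js,
  foldr (@pd R n) (fun x => f x * g x) js = fun x =>
    \sum_(mk <- masks (size js))
      foldr (@pd R n) f (mask mk js) x * foldr (@pd R n) g (mask (map negb mk) js) x.
Proof.
move=> df dg; elim => [|j js IH]; first by apply/funext => x; rewrite /= big_seq1.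
rewrite /= IH pd_sum; last by move=> mk; apply: pderivableM.
apply/funext => x; rewrite big_cat !big_map /= -big_split /=.
by apply: eq_bigr => mk _; rewrite pdM.
Qed.

Lemma inf_pderivableM f g :
  inf_pderivable f -> inf_pderivable g -> inf_pderivable (fun x => f x * g x).
Proof.
by move=> df dg js j; rewrite iter_pdM //; apply: pderivable_sum => mk; apply: pderivableM.
Qed.

Lemma inf_pderivableX f k : inf_pderivable f -> inf_pderivable (fun x => f x ^+ k).
Proof.
move=> df; elim: k => [|k IH].
  by under eq_fun do rewrite expr0; apply: inf_pderivable_cst.
by under eq_fun do rewrite exprS; apply: inf_pderivableM.
Qed.

End Leibniz.

(** * Multi-indices as sorted sequences of directions *)

Section MultiIndices.
Variable n : nat.
Implicit Types (g : 'I_n -> nat) (s : seq 'I_n).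

(* A multi-index [g] is encoded by the nonincreasing sequence [mseq g] of the
   directions along which [pdm g] differentiates. Leibniz's rule along such a
   sequence produces subsequences, which are again sorted, i.e. multi-indices. *)
Definition ord_ge : rel 'I_n := fun i j => (j <= i)%N.

Definition mseq g : seq 'I_n := flatten [seq nseq (g j) j | j <- rev (enum 'I_n)].

Definition mcount s : 'I_n -> nat := fun j => count_mem j s.

Lemma ord_ge_trans : transitive ord_ge.
Proof. by move=> i j k /= ji kj; apply: leq_trans kj ji. Qed.

Lemma ord_ge_anti : antisymmetric ord_ge.
Proof. by move=> i j /andP[ji ij]; apply/val_inj/eqP; rewrite eqn_leq; apply/andP. Qed.

Lemma pdm_mseq (R : realType) g (f : 'rV[R]_n -> R[i]) :
  pdm g f = foldr (@pd R n) f (mseq g).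
Proof.
rewrite /pdm /mseq; elim: (rev (enum 'I_n)) => //= j r IH.
by rewrite foldr_cat IH; elim: (g j) => //= k ->.
Qed.

Lemma sumn_rev_enum (F : 'I_n -> nat) :
  sumn [seq F j | j <- rev (enum 'I_n)] = (\sum_(j < n) F j)%N.
Proof. by rewrite sumnE big_map big_rev big_enum. Qed.

Lemma count_mseq g i : count_mem i (mseq g) = g i.
Proof.
rewrite /mseq count_flatten -map_comp.
rewrite (eq_map (g := fun j => ((j == i) * g j)%N)); last first.
  by move=> j /=; rewrite count_nseq.
rewrite sumn_rev_enum (bigD1 i) //= eqxx mul1n big1 ?addn0 // => j /negbTE ->.
by rewrite mul0n.
Qed.

Lemma size_mseq g : size (mseq g) = mlen g.
Proof.
rewrite /mseq size_flatten /shape -map_comp (eq_map (g := g)) ?sumn_rev_enum //.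
by move=> j /=; rewrite size_nseq.
Qed.

Lemma sorted_flatten_nseq g s :
  sorted ord_ge s -> sorted ord_ge (flatten [seq nseq (g j) j | j <- s]).
Proof.
rewrite !(sorted_pairwise ord_ge_trans).
elim: s => [|j s IH] //= /andP[js /IH{}IH].
rewrite pairwise_cat IH andbT; apply/andP; split.
  apply/allrelP => _ _ /nseqP[-> _] /flattenP[_ /mapP[k ks ->]] /nseqP[-> _].
  exact: (allP js).
by elim: (g j) => //= k ->; rewrite andbT; apply/allP => _ /nseqP[-> _]; apply: leqnn.
Qed.

Lemma sorted_mseq g : sorted ord_ge (mseq g).
Proof.
apply: sorted_flatten_nseq; rewrite rev_sorted.
have := iota_ltn_sorted 0 n; rewrite -val_enum_ord sorted_map.
by apply: sub_sorted => i j /ltnW.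
Qed.

Lemma mseq_mcount s : sorted ord_ge s -> mseq (mcount s) = s.
Proof.
move=> ss; apply: (sorted_eq ord_ge_trans ord_ge_anti (sorted_mseq _) ss).
by apply/allP => i _ /=; rewrite count_mseq.
Qed.

Lemma mlen_mcount s : sorted ord_ge s -> mlen (mcount s) = size s.
Proof. by move=> ss; rewrite -size_mseq mseq_mcount. Qed.

End MultiIndices.

(** * Log-convex sequences and the Leibniz majorant *)

Section LogConvex.
Variables (R : realFieldType) (a : nat -> R).
Hypothesis a_gt0 : forall p, 0 < a p.
Hypothesis a_logconvex : forall p, (1 <= p)%N -> a p ^+ 2 <= a p.-1 * a p.+1.

Lemma logconvex_ratio_le p q : (p <= q)%N -> a p.+1 * a q <= a q.+1 * a p.
Proof.
elim: q => [|q IH]; first by rewrite leqn0 => /eqP ->; rewrite mulrC.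
rewrite leq_eqVlt => /orP[/eqP ->|/IH le_pq]; first by rewrite mulrC.
have := a_logconvex (ltn0Sn q); rewrite /=.
have := a_gt0 p; have := a_gt0 p.+1; have := a_gt0 q; have := a_gt0 q.+1.
have := a_gt0 q.+2; nra.
Qed.

Lemma logconvex_shift_le p p' q :
  (p <= p')%N -> a (p + q) * a p' <= a (p' + q) * a p.
Proof.
move=> le_pp'; elim: q => [|q IH]; first by rewrite !addn0 mulrC.
have ratio : a (p + q).+1 * a (p' + q) <= a (p' + q).+1 * a (p + q).
  by apply: logconvex_ratio_le; rewrite leq_add2r.
rewrite !addnS -(ler_pM2l (a_gt0 (p' + q))).
have := ler_wpM2r (ltW (a_gt0 p')) ratio.
have := ler_wpM2l (ltW (a_gt0 (p' + q).+1)) IH.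
lra.
Qed.

Hypothesis a0 : a 0%N = 1.

Lemma logconvex_superM p q : a p * a q <= a (p + q).
Proof. by have := logconvex_shift_le q (leq0n p); rewrite add0n a0 mulr1 addnC mulrC. Qed.

Hypothesis a1 : a 1%N = 1.

Lemma logconvex_split_le j m l : (1 <= j <= m)%N -> (l <= m - j)%N ->
  a j * a (m - j)%N * a l.+1 <= a m * a l.
Proof.
case/andP=> j_gt0 le_jm le_l.
have e1 : (1 + (j - 1) = j)%N by rewrite addnC subnK.
have e2 : (m - j + 1 + (j - 1) = m)%N by rewrite -addnA e1 subnK.
have := logconvex_shift_le (j - 1) (leq_addl (m - j) 1).
rewrite e1 e2 a1 mulr1 addn1 => /(ler_wpM2r (ltW (a_gt0 l))).
have := logconvex_shift_le 1 le_l; rewrite !addn1 => /(ler_wpM2l (ltW (a_gt0 j))).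
lra.
Qed.

End LogConvex.

Definition dweight (R : pzSemiRingType) (t : R) (m : nat) : R := t ^+ m * (m`!)%:R.

Lemma dweight0 (R : pzSemiRingType) (t : R) : dweight t 0 = 1.
Proof. by rewrite /dweight expr0 mul1r. Qed.

Lemma dweight_ge0 (R : numDomainType) (t : R) m : 0 <= t -> 0 <= dweight t m.
Proof. by move=> t_ge0; rewrite mulr_ge0 ?exprn_ge0 ?ler0n. Qed.

Lemma dweight_split (R : comPzSemiRingType) (t : R) m j : (j <= m)%N ->
  'C(m, j)%:R * (dweight t j * dweight t (m - j)%N) = dweight t m.
Proof.
move=> le_jm; rewrite /dweight -(bin_fact le_jm) -[in t ^+ m](subnKC le_jm) exprD.
by rewrite !natrM; ring.
Qed.

(* [ncomp l m] is the number of compositions of [m] into [l] positive parts. *)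
Fixpoint ncomp (l m : nat) : nat :=
  if l is l'.+1 then \sum_(i < m) ncomp l' i else (m == 0)%N.

Lemma ncomp_small l m : (m < l)%N -> ncomp l m = 0%N.
Proof.
elim: l m => [//|l IH] m /=; rewrite ltnS => le_ml.
by rewrite big1 // => i _; apply: IH; apply: leq_trans (ltn_ord i) le_ml.
Qed.

Lemma ncomp_le_exp2 l m : (ncomp l m <= 2 ^ m)%N.
Proof.
elim: l m => [|l IH] m /=; first by case: m.
apply: (@leq_trans (\sum_(i < m) 2 ^ i)); first exact: leq_sum.
by have := predn_exp 2 m; rewrite mul1n => <-; apply: leq_pred.
Qed.

Section LeibnizMajorant.
Variables (R : realFieldType) (a : nat -> R) (C : R).
Hypothesis a_gt0 : forall p, 0 < a p.
Hypothesis a_logconvex : forall p, (1 <= p)%N -> a p ^+ 2 <= a p.-1 * a p.+1.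
Hypotheses (a0 : a 0%N = 1) (a1 : a 1%N = 1).
Hypothesis C_ge1 : 1 <= C.

(* With [c_0 = 1] and [c_j = C] for [j > 0], this bounds the sum of
   [c_(j_1) a_(j_1) * ... * c_(j_k) a_(j_k)] over [j_1 + ... + j_k = m]: for the
   [l] nonzero indices, log-convexity bounds the product of the [a]'s by
   [a_m / a_l]. *)
Definition leibniz_majorant k m : R :=
  \sum_(l < k.+1) 'C(k, l)%:R * (C ^+ l / a l * (ncomp l m)%:R).

Lemma exp_div_ge0 l : 0 <= C ^+ l / a l.
Proof. by apply: divr_ge0; [apply/exprn_ge0/(le_trans ler01 C_ge1) | apply/ltW]. Qed.

Lemma leibniz_majorant_ge0 k m : 0 <= leibniz_majorant k m.
Proof.
apply: sumr_ge0 => l _.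
by apply: mulr_ge0; [apply: ler0n | apply: mulr_ge0; [apply: exp_div_ge0 | apply: ler0n]].
Qed.

Lemma leibniz_majorant0 m : leibniz_majorant 0 m = (m == 0)%:R.
Proof. by rewrite /leibniz_majorant big_ord1 /= a0 divr1 !mul1r. Qed.

Lemma leibniz_majorantS k m : leibniz_majorant k.+1 m = leibniz_majorant k m +
  \sum_(l < k.+1) 'C(k, l)%:R * (C ^+ l.+1 / a l.+1 * (ncomp l.+1 m)%:R).
Proof.
exact: (pascal_sum (fun l => C ^+ l / a l * (ncomp l m)%:R)).
Qed.

Lemma leibniz_majorant_rec k m :
  \sum_(j < m.+1) (if j == 0%N :> nat then 1 else C) * (a j * a (m - j)%N) *
     leibniz_majorant k (m - j)%N
  <= a m * leibniz_majorant k.+1 m.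
Proof.
rewrite big_ord_recl /= subn0 a0 !mul1r leibniz_majorantS mulrDr lerD2l.
under eq_bigr do rewrite /bump /= add1n.
rewrite /leibniz_majorant; under eq_bigr do rewrite mulr_sumr.
rewrite exchange_big /= mulr_sumr; apply: ler_sum => l _.
rewrite natr_sum !mulr_sumr [in X in _ <= X](reindex_inj rev_ord_inj) /=.
apply: ler_sum => i _.
have [/ncomp_small ->|le_l] := ltnP (m - i.+1)%N l; first by rewrite !(mulr0, mul0r).
have key := @logconvex_split_le _ _ a_gt0 a_logconvex a1 i.+1 m l (ltn_ord i) le_l.
set N := (ncomp l (m - i.+1)%N)%:R; set Ckl := 'C(k, l)%:R.
set K := Ckl * C ^+ l.+1 * N / (a l * a l.+1).
have K_ge0 : 0 <= K.
  apply: divr_ge0; last by rewrite ltW // mulr_gt0.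
  apply: mulr_ge0; last exact: ler0n.
  by apply: mulr_ge0; [apply: ler0n | apply/exprn_ge0/(le_trans ler01 C_ge1)].
have a_l0 := gt_eqF (a_gt0 l); have a_l1 := gt_eqF (a_gt0 l.+1).
have -> : C * (a i.+1 * a (m - i.+1)%N) * (Ckl * (C ^+ l / a l * N)) =
          K * (a i.+1 * a (m - i.+1)%N * a l.+1).
  by rewrite /K exprS; field; rewrite a_l0 a_l1.
have -> : a m * (Ckl * (C ^+ l.+1 / a l.+1 * N)) = K * (a m * a l).
  by rewrite /K; field; rewrite a_l0 a_l1.
by rewrite ler_wpM2l.
Qed.

Lemma leibniz_majorant_step (beta t : R) k m : 0 <= beta -> 0 <= t ->
  \sum_(j < m.+1) 'C(m, j)%:R *
    ((if j == 0%N :> nat then 1 else C) * beta * dweight t j * a j *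
     (beta ^+ k * dweight t (m - j)%N * a (m - j)%N * leibniz_majorant k (m - j)%N))
  <= beta ^+ k.+1 * dweight t m * a m * leibniz_majorant k.+1 m.
Proof.
move=> beta_ge0 t_ge0.
have -> : \sum_(j < m.+1) 'C(m, j)%:R *
    ((if j == 0%N :> nat then 1 else C) * beta * dweight t j * a j *
     (beta ^+ k * dweight t (m - j)%N * a (m - j)%N * leibniz_majorant k (m - j)%N)) =
    beta ^+ k.+1 * dweight t m * \sum_(j < m.+1) (if j == 0%N :> nat then 1 else C) *
      (a j * a (m - j)%N) * leibniz_majorant k (m - j)%N.
  rewrite mulr_sumr; apply: eq_bigr => j _.
  by rewrite -(dweight_split t (ltnSE (ltn_ord j))) exprS; ring.
have bw_ge0 : 0 <= beta ^+ k.+1 * dweight t m.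
  by apply: mulr_ge0; [apply: exprn_ge0 | apply: dweight_ge0].
by rewrite -[X in _ <= X]mulrA; apply/(ler_wpM2l bw_ge0)/leibniz_majorant_rec.
Qed.

Lemma leibniz_majorant_le K : (forall l, C ^+ l / a l <= K) ->
  forall k m, leibniz_majorant k m <= K * 2 ^+ m * 2 ^+ k.
Proof.
move=> le_K k m.
have sum_bin : \sum_(l < k.+1) ('C(k, l))%:R = 2 ^+ k :> R.
  rewrite -natr_sum -natrX -{1}[2%N]/(1 + 1)%N expnDn.
  by congr (_ %:R); apply: eq_bigr => l _; rewrite !exp1n !muln1.
rewrite -sum_bin mulr_sumr; apply: ler_sum => l _.
rewrite [X in _ <= X]mulrC ler_wpM2l ?ler0n //.
apply: ler_pM; rewrite ?exp_div_ge0 ?ler0n //.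
by rewrite -natrX ler_nat ncomp_le_exp2.
Qed.

End LeibnizMajorant.

(** * Growth of [a_p = A_p / p!] under (M.3)' *)

Section ExpDivBounded.
Variables (R : realType) (A : nat -> R) (C : R).
Hypothesis A_gt0 : forall p, 0 < A p.
Hypotheses (A_M3' : cond_M3' A) (A_M4 : cond_M4 A).
Hypothesis C_ge1 : 1 <= C.

Let a p := A p / (p`!)%:R.

Let a_gt0 p : 0 < a p.
Proof. by rewrite divr_gt0 // ltr0n fact_gt0. Qed.

Let C_gt0 : 0 < C.
Proof. exact: lt_le_trans ltr01 C_ge1. Qed.

Lemma harmonic_le_ratio n : a n.+1 < C * a n -> harmonic n <= C * (A n / A n.+1).
Proof.
have f_gt0 : 0 < (n`!)%:R :> R by rewrite ltr0n fact_gt0.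
have n1_gt0 : 0 < n.+1%:R :> R by rewrite ltr0n.
have An1_gt0 := A_gt0 n.+1.
rewrite /a factS natrM -(ltr_pM2r (mulr_gt0 n1_gt0 f_gt0)) /harmonic /=.
rewrite -(ler_pM2r (mulr_gt0 n1_gt0 An1_gt0)).
have -> : A n.+1 / (n.+1%:R * (n`!)%:R) * (n.+1%:R * (n`!)%:R) = A n.+1.
  by field; rewrite !gt_eqF.
have -> : C * (A n / (n`!)%:R) * (n.+1%:R * (n`!)%:R) = C * A n * n.+1%:R.
  by field; rewrite gt_eqF.
have -> : n.+1%:R^-1 * (n.+1%:R * A n.+1) = A n.+1 by field; rewrite gt_eqF.
have -> : C * (A n / A n.+1) * (n.+1%:R * A n.+1) = C * A n * n.+1%:R.
  by field; rewrite gt_eqF.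
exact: ltW.
Qed.

Lemma exists_ratio_ge : exists l0, C * a l0 <= a l0.+1.
Proof.
apply/not_existsP => not_ge.
have lt_ratio n : a n.+1 < C * a n by rewrite ltNge; apply/negP/not_ge.
apply: (@dvg_harmonic R).
apply: (@series_le_cvg R _ (C *: (fun p => A p / A p.+1))).
- by move=> n; apply: harmonic_ge0.
- by move=> n; apply: mulr_ge0; [apply: ltW | apply: divr_ge0; apply: ltW].
- by move=> n; apply: harmonic_le_ratio.
- exact: is_cvg_seriesZ.
Qed.

Lemma exp_div_bounded : exists K, forall l, C ^+ l / a l <= K.
Proof.
have [l0 le_ratio] := exists_ratio_ge.
have ratio_ge k : (l0 <= k)%N -> C * a k <= a k.+1.
  move=> le_l0k; rewrite -(ler_pM2r (a_gt0 l0)) mulrAC.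
  apply: le_trans (logconvex_ratio_le a_gt0 A_M4 le_l0k).
  by rewrite ler_wpM2r // ltW.
have decr d : C ^+ (l0 + d) / a (l0 + d)%N <= C ^+ l0 / a l0.
  elim: d => [|d IH]; first by rewrite addn0.
  apply: le_trans IH; rewrite addnS exprS ler_pdivrMr // mulrAC ler_pdivlMr //.
  rewrite mulrAC mulrC; apply/(ler_wpM2l (exprn_ge0 _ (ltW C_gt0))).
  exact/ratio_ge/leq_addr.
exists (\sum_(l < l0.+1) C ^+ l / a l); move=> l.
have le_sum i : (i <= l0)%N -> C ^+ i / a i <= \sum_(l < l0.+1) C ^+ l / a l.
  move=> le_il0; rewrite (bigD1 (Ordinal (le_il0 : i < l0.+1)%N)) // lerDl.
  by apply: sumr_ge0 => j _; apply: exp_div_ge0.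
have [/le_sum //|lt_l0l] := leqP l l0.
apply: le_trans (le_sum _ (leqnn l0)).
by have := decr (l - l0)%N; rewrite subnKC // ltnW.
Qed.

End ExpDivBounded.

(** * Estimates for powers *)

Section ComplexModulus.
Variable R : realType.
Implicit Types z u : R[i].

Lemma cabs_ge0 z : 0 <= cabs z.
Proof. by case: z => ? ?; rewrite /cabs /= sqrtr_ge0. Qed.

Lemma cabs0 : cabs (0 : R[i]) = 0.
Proof. exact: ComplexField.Normc.normc0. Qed.

Lemma cabs1 : cabs (1 : R[i]) = 1.
Proof. exact: ComplexField.Normc.normc1. Qed.

Lemma cabsM z u : cabs (z * u) = cabs z * cabs u.
Proof. exact: ComplexField.Normc.normcM. Qed.

Lemma cabs_sum (I : Type) (r : seq I) (F : I -> R[i]) :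
  cabs (\sum_(i <- r) F i) <= \sum_(i <- r) cabs (F i).
Proof.
elim: r => [|i r IH]; first by rewrite !big_nil cabs0.
by rewrite !big_cons; apply: le_trans (le_normcD _ _) _; rewrite lerD2l.
Qed.

Lemma cabs_iCX k : cabs (iC R ^+ k) = 1.
Proof.
elim: k => [|k IH]; first by rewrite expr0 cabs1.
by rewrite exprS cabsM IH mulr1 /cabs /iC /= expr0n add0r expr1n sqrtr1.
Qed.

Lemma cabs_Dop n g (f : 'rV[R]_n -> R[i]) x :
  cabs (Dop g f x) = cabs (foldr (@pd R n) f (mseq g) x).
Proof.
by rewrite /Dop cabsM /cabs ComplexField.Normc.normcV -/(cabs _) cabs_iCX invr1 mul1r pdm_mseq.
Qed.

End ComplexModulus.

Section PowerEstimate.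
Variables (R : realType) (n : nat) (f : 'rV[R]_n -> R[i]) (x : 'rV[R]_n).
Variables (t C : R) (a : nat -> R).
Hypothesis f_inf : inf_pderivable f.
Hypotheses (t_ge0 : 0 <= t) (C_ge1 : 1 <= C).
Hypothesis a_gt0 : forall p, 0 < a p.
Hypothesis a_logconvex : forall p, (1 <= p)%N -> a p ^+ 2 <= a p.-1 * a p.+1.
Hypotheses (a0 : a 0%N = 1) (a1 : a 1%N = 1).
Hypothesis f_bound : forall s, sorted (@ord_ge n) s -> (0 < size s)%N ->
  cabs (foldr (@pd R n) f s x) <= C * cabs (f x) * dweight t (size s) * a (size s).

Lemma iter_pd_exp_le k s : sorted (@ord_ge n) s ->
  cabs (foldr (@pd R n) (fun y => f y ^+ k) s x)
    <= cabs (f x) ^+ k * dweight t (size s) * a (size s) * leibniz_majorant a C k (size s).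
Proof.
elim: k s => [|k IH] s s_sorted.
  under eq_fun do rewrite expr0.
  rewrite iter_pd_cst; case: s s_sorted => [|j s] _.
    by rewrite cabs1 /= (leibniz_majorant0 _ a0) a0 dweight0 expr0 eqxx !mul1r.
  rewrite cabs0 expr0 mul1r; apply: mulr_ge0; last exact: leibniz_majorant_ge0.
  by apply: mulr_ge0; [apply: dweight_ge0 | apply: ltW].
set b := cabs (f x).
pose P k' m' := b ^+ k' * dweight t m' * a m' * leibniz_majorant a C k' m'.
pose g j := (if j == 0%N then 1 else C) * b * dweight t j * a j.
have f_bound' s' : sorted (@ord_ge n) s' -> cabs (foldr (@pd R n) f s' x) <= g (size s').
  case: s' => [|j s'] ss; last exact: f_bound.
  by change (b <= g 0%N); rewrite /g eqxx dweight0 a0 !mul1r !mulr1.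
under eq_fun do rewrite exprS.
rewrite iter_pdM //; last exact: inf_pderivableX.
cbv beta; apply: le_trans (cabs_sum _ _) _.
apply: (@le_trans _ _
  (\sum_(mk <- masks (size s)) g (count id mk) * P k (size s - count id mk)%N)).
  rewrite big_seq_cond [X in _ <= X]big_seq_cond; apply: ler_sum => mk /andP[mk_in _].
  have size_mk := size_masks mk_in.
  rewrite cabsM; apply: ler_pM; [exact: cabs_ge0 | exact: cabs_ge0 | |].
    by have := f_bound' _ (sorted_mask (@ord_ge_trans n) mk s_sorted); rewrite size_mask.
  have := IH _ (sorted_mask (@ord_ge_trans n) (map negb mk) s_sorted).
  rewrite size_mask ?size_map // count_map.
  have -> : count (preim negb id) mk = (size s - count id mk)%N.
    by rewrite -size_mk -(count_predC id mk) addKn.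
  by [].
rewrite (@sum_masks_count _ _ (fun j => g j * P k (size s - j)%N)).
exact: (leibniz_majorant_step a_gt0 a_logconvex a0 a1 C_ge1 k (size s) (cabs_ge0 _) t_ge0).
Qed.

End PowerEstimate.

Lemma mlen_split d (g : 'I_(d + d) -> nat) : mlen g = (mlen (gx g) + mlen (gxi g))%N.
Proof. by rewrite /mlen big_split_ord. Qed.

Lemma powRN_mulrn (R : realType) (x r : R) m : x `^ (- (r * m%:R)) = (x `^ (- r)) ^+ m.
Proof. by rewrite -mulNr powRrM powR_mulrn // powR_ge0. Qed.

Section SortedDopBound.
Variables (R : realType) (d : nat) (A : nat -> R) (rho h C : R).
Variables (b : 'rV[R]_(d + d) -> R[i]) (w : 'rV[R]_(d + d)).
Hypothesis A_gt0 : forall p, 0 < A p.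
Hypotheses (A_M1 : cond_M1 A) (A0 : A 0%N = 1).
Hypotheses (h_ge0 : 0 <= h) (C_ge0 : 0 <= C).
Hypothesis Dop_b_le : forall g, cabs (Dop g b w) <= C * h ^+ mlen g * cabs (b w)
  * A (mlen (gxi g)) * A (mlen (gx g)) * jap w `^ (- (rho * (mlen g)%:R)).

Lemma iter_pd_le_of_Dop_le s : sorted (@ord_ge _) s ->
  cabs (foldr (@pd R _) b s w) <=
  C * cabs (b w) * dweight (h * jap w `^ (- rho)) (size s) * (A (size s) / (size s)`!%:R).
Proof.
move=> s_sorted; have := Dop_b_le (mcount s).
rewrite cabs_Dop mseq_mcount // mlen_mcount // => /le_trans; apply.
have AA_le : A (mlen (gxi (mcount s))) * A (mlen (gx (mcount s))) <= A (size s).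
  by rewrite -(mlen_mcount s_sorted) mlen_split addnC logconvex_superM.
rewrite /dweight exprMn powRN_mulrn.
set m := size s; set X := C * h ^+ m * cabs (b w); set Y := jap w `^ (- rho) ^+ m.
have fact_neq0 : (m`!)%:R != 0 :> R by rewrite pnatr_eq0 -lt0n fact_gt0.
have -> : C * cabs (b w) * (h ^+ m * Y * (m`!)%:R) * (A m / (m`!)%:R) = X * A m * Y.
  by rewrite /X; field.
rewrite -(mulrA X); apply/(ler_wpM2r (exprn_ge0 _ (powR_ge0 _ _))).
apply/(ler_wpM2l _ AA_le).
by rewrite /X !mulr_ge0 ?exprn_ge0 ?cabs_ge0.
Qed.

End SortedDopBound.

Lemma power_estimate_of_Dop_le (R : realType) d (A : nat -> R) (rho B h C : R)
    (b : 'rV[R]_(d + d) -> R[i]) :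
  seq_pos A -> cond_M1 A -> cond_M3' A -> cond_M4 A -> smooth b -> 0 < h ->
  (forall g w, ~ Qt B w -> cabs (Dop g b w) <= C * h ^+ mlen g * cabs (b w)
     * A (mlen (gxi g)) * A (mlen (gx g)) * jap w `^ (- (rho * (mlen g)%:R))) ->
  exists K, 0 < K /\ power_estimate A rho B (2 * h) K b.
Proof.
move=> [A_gt0 [A0 A1]] A_M1 A_M3' A_M4 b_smooth h_gt0 Dop_b_le.
set C' := Num.max C 1.
have C'_ge1 : 1 <= C' by rewrite le_max lexx orbT.
have [K le_K] := exp_div_bounded A_gt0 A_M3' A_M4 C'_ge1.
pose a p := A p / (p`!)%:R.
have a_gt0 p : 0 < a p by rewrite divr_gt0 // ltr0n fact_gt0.
have a0 : a 0%N = 1 by rewrite /a A0 divr1.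
have a1 : a 1%N = 1 by rewrite /a A1 divr1.
have K_ge1 : 1 <= K by have := le_K 0%N; rewrite expr0 A0 fact0 mulr1n !divr1.
exists K; split => [|g k w w_out]; first exact: lt_le_trans ltr01 K_ge1.
have t_ge0 : 0 <= h * jap w `^ (- rho) by rewrite mulr_ge0 ?powR_ge0 // ltW.
have Dop_b_le' g' : cabs (Dop g' b w) <= C' * h ^+ mlen g' * cabs (b w)
    * A (mlen (gxi g')) * A (mlen (gx g')) * jap w `^ (- (rho * (mlen g')%:R)).
  apply: le_trans (Dop_b_le g' w w_out) _; rewrite -!mulrA.
  apply/(ler_wpM2r _ (_ : C <= C')); last by rewrite le_max lexx.
  by rewrite !mulr_ge0 ?exprn_ge0 ?cabs_ge0 ?powR_ge0 // ?ltW.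
have := iter_pd_exp_le (smooth_inf_pderivable b_smooth) t_ge0 C'_ge1 a_gt0 A_M4 a0 a1
  (fun s s_sorted _ => iter_pd_le_of_Dop_le A_gt0 A_M1 A0 (ltW h_gt0)
     (le_trans ler01 C'_ge1) Dop_b_le' s_sorted) k (sorted_mseq g).
rewrite size_mseq -cabs_Dop => /le_trans; apply.
set m := mlen g; set J := jap w `^ (- rho).
have fact_neq0 : (m`!)%:R != 0 :> R by rewrite pnatr_eq0 -lt0n fact_gt0.
have -> : cabs (b w) ^+ k * dweight (h * J) m * a m * leibniz_majorant a C' k m =
    cabs (b w) ^+ k * h ^+ m * J ^+ m * A m * leibniz_majorant a C' k m.
  by rewrite /dweight /a exprMn; field.
have -> : K * 2 ^+ k * (2 * h) ^+ m * A m * jap w `^ (- (rho * m%:R)) * cabs (b w) ^+ k =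
    cabs (b w) ^+ k * h ^+ m * J ^+ m * A m * (K * 2 ^+ m * 2 ^+ k).
  by rewrite powRN_mulrn exprMn; ring.
apply/(ler_wpM2l _ (leibniz_majorant_le a_gt0 C'_ge1 le_K k m)).
by rewrite !mulr_ge0 ?exprn_ge0 ?cabs_ge0 ?powR_ge0 // ltW.
Qed.

Theorem corollary7p7 (R : realType) (k : ultra_kind) (d : nat)
    (M A : nat -> R) (rho B : R) (b : 'rV[R]_(d + d) -> R[i]) :
  standing M A rho ->
  Gamma k M A rho b ->
  hypo_i k M B b ->
  hypo_ii k A rho B b ->
  match k with
  | Beurling => forall h : R, 0 < h -> exists C : R, 0 < C /\ power_estimate A rho B h C b
  | Roumieu => exists h C : R, [/\ 0 < h, 0 < C & power_estimate A rho B h C b]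
  end.
Proof.
move=> [[_ A_seq] _ [A_M1 _ A_M3' A_M4] _ _] [b_smooth _] _.
have estimate := power_estimate_of_Dop_le A_seq A_M1 A_M3' A_M4 b_smooth.
case: k => /= Dop_b_le.
- move=> h h_gt0; have h2_gt0 : 0 < h / 2 by rewrite divr_gt0.
  have [C /(estimate _ _ _ _ h2_gt0) [K [K_gt0 est]]] := Dop_b_le _ h2_gt0.
  by exists K; rewrite mulrC divfK ?pnatr_eq0 in est.
- have [h [C [h_gt0 /(estimate _ _ _ _ h_gt0) [K [K_gt0 est]]]]] := Dop_b_le.
  by exists (2 * h), K; rewrite mulr_gt0.
Qed.
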